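(* Let $T$ be a minimal rotation on a locally connected compact metrizable group $X$ and let $f\colon X\to G$ be a continuous topologically recurrent cocycle for $T$ with values in a nilpotent locally compact second countable group $G$. Let $H$ be a closed subgroup of $G$ and $y\mapsto H_y$ a consistent selection of subgroups in the essential ranges of $f$ satisfying $E_y(f)\subseteq N(H_y)$ for every $y\in X$, and suppose there exists $x\in X$ with $E_x(f)=H_x$. Let $z\in X$ and $g\in N(H_z)\setminus H_z$. Then there is a neighbourhood $U$ of $\mathbf 1_G$ such that for all integers $n$, \[f(n,z)\,gH_z\,f(n,z)^{-1}\cap U=\varnothing.\]
   Context: The cocycle is $f(n,x)=f(T^{n-1}x)\cdots f(x)$ for $n\ge1$, $f(0,x)=\mathbf 1_G$, $f(n,x)=f(-n,T^nx)^{-1}$ for $n<0$. $f$ is topologically recurrent if for every open neighbourhood $U$ of $\mathbf 1_G$ and nonempty open $\mathcal O\subseteq X$ there is $n\neq0$ with $T^{-n}\mathcal O\cap\mathcal O\cap\{y:f(n,y)\in U\}\neq\varnothing$; $E_x(f)$ is the set of $g$ such that this holds for every open neighbourhood $U$ of $g$ and every open neighbourhood $\mathcal O$ of $x$. For a subgroup $L$, $N(L)=\{g\in G:gLg^{-1}=L\}$. $H^G=\{gHg^{-1}:g\in G\}$, topologised via the bijection with $G/N(H)$. A consistent selection is a continuous map $y\mapsto H_y$, $X\to H^G$, with $H_x\subseteq E_x(f)$ and $H_{T^nx}=f(n,x)H_xf(n,x)^{-1}$ for all $x,n$. *)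

From HB Require Import structures.
From mathcomp Require Import all_boot all_order all_algebra.
From mathcomp Require Import all_classical all_reals topology.
From mathcomp Require Import Rstruct Rstruct_topology.
From Stdlib Require Import Rdefinitions.
Set Implicit Arguments. Unset Strict Implicit. Unset Printing Implicit Defensive.
Import Order.TTheory GRing.Theory Num.Theory.
Local Open Scope classical_set_scope.

Section GroupDefs.
Variables (G : Type) (mul : G -> G -> G) (inv : G -> G) (one : G).

Definition is_group : Prop :=
  (forall x y z, mul x (mul y z) = mul (mul x y) z) /\
  (forall x, mul one x = x) /\ (forall x, mul x one = x) /\
  (forall x, mul (inv x) x = one) /\ (forall x, mul x (inv x) = one).

Definition is_subgroup (L : set G) : Prop :=
  L one /\ (forall x y, L x -> L y -> L (mul x y)) /\ (forall x, L x -> L (inv x)).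

Definition conjset (g : G) (L : set G) : set G :=
  (fun h => mul (mul g h) (inv g)) @` L.

Definition lcoset (g : G) (L : set G) : set G := (fun h => mul g h) @` L.

Definition normaliser (L : set G) : set G := [set g | conjset g L = L].

Definition conj_class (H : set G) : set (set G) := [set K | exists g, K = conjset g H].

Definition commg (x y : G) : G := mul (mul (inv x) (inv y)) (mul x y).

Definition gen_subgroup (A : set G) : set G :=
  [set g | forall L, is_subgroup L -> A `<=` L -> L g].

Fixpoint lower_central (i : nat) : set G :=
  match i with
  | 0 => setT
  | i'.+1 => gen_subgroup [set c | exists a b, lower_central i' a /\ c = commg a b]
  end.

Definition nilpotent_group : Prop := exists c, lower_central c = [set one].

Definition zpow (a : G) (n : int) : G :=
  match n with
  | Posz k => iter k (mul a) one
  | Negz k => iter k.+1 (mul (inv a)) one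
  end.
End GroupDefs.

Definition is_topgroup (G : topologicalType) (mul : G -> G -> G) (inv : G -> G)
  (one : G) : Prop :=
  is_group mul inv one /\
  continuous (fun p : G * G => mul p.1 p.2) /\ continuous inv.

Definition locally_connected (T : topologicalType) : Prop :=
  forall (x : T) (U : set T), nbhs x U ->
    exists V : set T, open V /\ connected V /\ V x /\ V `<=` U.

Definition metrizable (T : topologicalType) : Prop :=
  exists d : T -> T -> R,
    (forall x y, d x y = 0%R <-> x = y) /\ (forall x y, d x y = d y x) /\
    (forall x y z, (d x z <= d x y + d y z)%R) /\
    (forall (x : T) (A : set T),
        nbhs x A <-> exists eps : R, (0 < eps)%R /\ [set y | (d x y < eps)%R] `<=` A).

Definition minimal_map (T : topologicalType) (S : T -> T) : Prop :=
  forall A : set T, closed A -> S @` A = A -> A = set0 \/ A = setT.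

Section Cocycle.
Variables (X : Type) (mulX : X -> X -> X) (invX : X -> X) (oneX : X) (a : X).
Variables (G : Type) (mul : G -> G -> G) (inv : G -> G) (one : G) (f : X -> G).

Definition rotn (n : int) (x : X) : X := mulX (zpow mulX invX oneX a n) x.

Fixpoint cocycle_nat (k : nat) (x : X) : G :=
  match k with
  | 0 => one
  | k'.+1 => mul (f (rotn (Posz k') x)) (cocycle_nat k' x)
  end.

(* f(n,x) for n : int; f(n,x) = f(-n,T^n x)^{-1} for n < 0 *)
Definition cocycle (n : int) (x : X) : G :=
  match n with
  | Posz k => cocycle_nat k x
  | Negz k => inv (cocycle_nat k.+1 (rotn (Negz k) x))
  end.
End Cocycle.

Section Recurrence.
Variables (X G : topologicalType) (Tn : int -> X -> X) (fn : int -> X -> G) (one : G).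

Definition top_recurrent : Prop :=
  forall U : set G, open U -> U one ->
  forall O : set X, open O -> O !=set0 ->
  exists n : int, n != 0 /\ exists y, O y /\ O (Tn n y) /\ U (fn n y).

Definition ess_range (x : X) : set G :=
  [set g | forall U : set G, open U -> U g ->
           forall O : set X, open O -> O x ->
           exists n : int, n != 0 /\ exists y, O y /\ O (Tn n y) /\ U (fn n y)].
End Recurrence.

(* Write H_z = e H e^-1 and g' = e^-1 g e, so that g' lies in N(H) but not in
   H.  If the conjugates f(n,z) g H_z f(n,z)^-1 came arbitrarily close to 1,
   then, y |-> H_y being continuous on the compact space X, the elements
   conjugating the H_y back to H can be chosen uniformly, and 1 would lie in the
   closure of the N(H)-conjugacy class of the coset g'H.  This is impossible in
   the nilpotent group N(H)/H: let Z_j be the preimages in N(H) of its upper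
   central series, closed normal subgroups of N(H) reaching N(H) at the
   nilpotency class.  If x lies in Z_(j+1) but not in Z_j, every N(H)-conjugate
   of x Z_j is contained in x Z_j, a closed set avoiding 1; downward induction
   on j thus forces g' into Z_0 = H.
   Only compactness of X, closedness of H, continuity and equivariance of the
   selection and nilpotency of G enter. *)

From Pilot Require Import Defs.
From HB Require Import structures.
From mathcomp Require Import all_boot all_order all_algebra.
From mathcomp Require Import all_classical all_reals topology.
From Stdlib Require Import Classical.
Set Implicit Arguments. Unset Strict Implicit. Unset Printing Implicit Defensive.
Local Open Scope classical_set_scope.

Section GroupLaws.
Variables (G : Type) (mul : G -> G -> G) (inv : G -> G) (one : G).
Hypothesis Hgrp : is_group mul inv one.

Lemma gmulA x y z : mul x (mul y z) = mul (mul x y) z.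
Proof. by case: Hgrp. Qed.
Lemma gmul1g x : mul one x = x. Proof. by case: Hgrp => _ []. Qed.
Lemma gmulg1 x : mul x one = x. Proof. by case: Hgrp => _ [_ []]. Qed.
Lemma gmulVg x : mul (inv x) x = one. Proof. by case: Hgrp => _ [_ [_ []]]. Qed.
Lemma gmulgV x : mul x (inv x) = one. Proof. by case: Hgrp => _ [_ [_ []]]. Qed.
Lemma gmulKg x y : mul (inv x) (mul x y) = y.
Proof. by rewrite gmulA gmulVg gmul1g. Qed.
Lemma gmulKVg x y : mul x (mul (inv x) y) = y.
Proof. by rewrite gmulA gmulgV gmul1g. Qed.
Lemma ginv_unique x y : mul x y = one -> y = inv x.
Proof. by move=> xy1; rewrite -[y](gmulKg x) xy1 gmulg1. Qed.
Lemma ginvgK x : inv (inv x) = x.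
Proof. by apply/esym/ginv_unique; rewrite gmulVg. Qed.
Lemma ginvMg x y : inv (mul x y) = mul (inv y) (inv x).
Proof. by apply/esym/ginv_unique; rewrite -gmulA gmulKVg gmulgV. Qed.
Lemma ginvg1 : inv one = one.
Proof. by apply/esym/ginv_unique; rewrite gmulg1. Qed.

Definition gconj (m x : G) : G := mul (mul m x) (inv m).

End GroupLaws.

Ltac group_simpl Hgrp := rewrite /gconj /Defs.commg;
  repeat progress rewrite ?(ginvMg Hgrp) ?(ginvgK Hgrp) ?(ginvg1 Hgrp)
    -?(gmulA Hgrp) ?(gmulKg Hgrp) ?(gmulKVg Hgrp) ?(gmulgV Hgrp)
    ?(gmulVg Hgrp) ?(gmul1g Hgrp) ?(gmulg1 Hgrp).

Section Conjugation.
Variables (G : Type) (mul : G -> G -> G) (inv : G -> G) (one : G).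
Hypothesis Hgrp : is_group mul inv one.
Local Notation gconj := (gconj mul inv).
Local Notation commg := (Defs.commg mul inv).
Local Notation conjset := (conjset mul inv).

Lemma gconjM a b x : gconj (mul a b) x = gconj a (gconj b x).
Proof. by group_simpl Hgrp. Qed.
Lemma gconjK m x : gconj (inv m) (gconj m x) = x.
Proof. by group_simpl Hgrp. Qed.
Lemma gconj1g x : gconj one x = x.
Proof. by group_simpl Hgrp. Qed.

Lemma mulg_commgV x m : mul x (commg x (inv m)) = gconj m x.
Proof. by group_simpl Hgrp. Qed.
Lemma commgMl x y m : commg (mul x y) m = mul (gconj (inv y) (commg x m)) (commg y m).
Proof. by group_simpl Hgrp. Qed.
Lemma commgVl x m : commg (inv x) m = gconj x (inv (commg x m)).
Proof. by group_simpl Hgrp. Qed.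
Lemma commg_gconjl n x m : commg (gconj n x) m = gconj n (commg x (gconj (inv n) m)).
Proof. by group_simpl Hgrp. Qed.
Lemma comm1g m : commg one m = one.
Proof. by group_simpl Hgrp. Qed.
Lemma commgEconj x m : commg x m = mul (inv x) (gconj (inv m) x).
Proof. by group_simpl Hgrp. Qed.

Lemma conjsetM a b L : conjset (mul a b) L = conjset a (conjset b L).
Proof.
apply/seteqP; split => [_ [h Lh <-]|_ [_ [h Lh <-] <-]].
  by exists (gconj b h); [exists h | group_simpl Hgrp].
by exists h => //; group_simpl Hgrp.
Qed.
Lemma conjset1 L : conjset one L = L.
Proof.
by apply/seteqP; split => [_ [h Lh <-]|h Lh]; [|exists h]; group_simpl Hgrp.
Qed.

Lemma normaliser_conjset e L g :
  normaliser mul inv (conjset e L) g -> normaliser mul inv L (gconj (inv e) g).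
Proof.
rewrite /normaliser /= => Eg.
rewrite /gconj (ginvgK Hgrp) !conjsetM Eg.
by rewrite -conjsetM (gmulVg Hgrp) conjset1.
Qed.

End Conjugation.

Section RelativeUpperCentral.
Variables (G : Type) (mul : G -> G -> G) (inv : G -> G) (one : G).
Hypothesis Hgrp : is_group mul inv one.
Local Notation gconj := (gconj mul inv).
Local Notation commg := (Defs.commg mul inv).
Variable H : set G.
Hypothesis HHsub : is_subgroup mul inv one H.

Let H1 : H one. Proof. by case: HHsub. Qed.
Let HM x y : H x -> H y -> H (mul x y). Proof. by case: HHsub => _ [HM _]; apply: HM. Qed.
Let HV x : H x -> H (inv x). Proof. by case: HHsub => _ [_ HV]; apply: HV. Qed.

Definition normalises (L : set G) (m : G) : Prop :=
  forall h, L h -> L (gconj m h) /\ L (gconj (inv m) h).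

Lemma normalises1 : normalises H one.
Proof. by move=> h Hh; rewrite (ginvg1 Hgrp) (gconj1g Hgrp). Qed.
Lemma normalisesV m : normalises H m -> normalises H (inv m).
Proof. by move=> Nm h /Nm[]; rewrite (ginvgK Hgrp). Qed.
Lemma normalisesM a b : normalises H a -> normalises H b -> normalises H (mul a b).
Proof.
move=> Na Nb h Hh; rewrite !(gconjM Hgrp) (ginvMg Hgrp) (gconjM Hgrp).
by split; [apply: (Na _ (Nb _ Hh).1).1 | apply: (Nb _ (Na _ Hh).2).2].
Qed.
Lemma normalises_conj n m :
  normalises H n -> normalises H m -> normalises H (gconj n m).
Proof. by move=> Nn Nm; apply: normalisesM; [apply: normalisesM|apply: normalisesV]. Qed.
Lemma subgroup_normalises h : H h -> normalises H h.
Proof. by move=> Hh k Hk; split; apply: HM; do ?apply: HM; do ?apply: HV. Qed.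

Lemma normaliser_normalises m : normaliser mul inv H m -> normalises H m.
Proof.
rewrite /normaliser /= => Em h Hh; split; first by rewrite -Em; exists h.
by move: Hh; rewrite -{1}Em => -[k Hk <-]; rewrite (gconjK Hgrp).
Qed.

(* [upper_central_mod j] is the preimage in N(H) of the j-th term of the upper
   central series of N(H)/H. *)
Fixpoint upper_central_mod (j : nat) : set G :=
  if j is j'.+1 then
    [set x | normalises H x /\
             forall m, normalises H m -> upper_central_mod j' (commg x m)]
  else H.

Definition normal_in_normaliser (S : set G) : Prop :=
  [/\ S `<=` normalises H, S one, (forall x y, S x -> S y -> S (mul x y)),
      (forall x, S x -> S (inv x)) &
      (forall n x, normalises H n -> S x -> S (gconj n x))].

Lemma upper_central_mod_normal j : normal_in_normaliser (upper_central_mod j).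
Proof.
elim: j => [|j [_ Z1 ZM ZV Zconj]].
  split=> [x||||n x Nn /Nn[]//]; [exact: subgroup_normalises | exact: H1 | |].
  - exact: HM.
  - exact: HV.
split=> [x []//|||x [Nx Zx]|n x Nn [Nx Zx]].
- by split=> [|m _]; [exact: normalises1 | rewrite (comm1g Hgrp)].
- move=> x y [Nx Zx] [Ny Zy]; split=> [|m Nm]; first exact: normalisesM.
  rewrite (commgMl Hgrp); apply: ZM (Zy _ Nm).
  by apply: Zconj (Zx _ Nm); apply: normalisesV.
- split=> [|m Nm]; first exact: normalisesV.
  by rewrite (commgVl Hgrp); apply: Zconj => //; apply/ZV/Zx.
- split=> [|m Nm]; first exact: normalises_conj.
  rewrite (commg_gconjl Hgrp); apply: Zconj => //; apply: Zx.
  by apply: normalises_conj => //; apply: normalisesV.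
Qed.

Lemma upper_central_modS j : upper_central_mod j `<=` upper_central_mod j.+1.
Proof.
elim: j => [|j IHj] x /=.
  move=> Hx; split=> [|m Nm]; first exact: subgroup_normalises.
  by rewrite (commgEconj Hgrp); apply: HM; [apply: HV | apply: (Nm _ Hx).2].
by move=> [Nx Zx]; split=> // m Nm; apply/IHj/Zx.
Qed.

Lemma lower_central_sub_upper_central_mod c i j x :
  lower_central mul inv one c = [set one] -> (i + j = c)%N ->
  lower_central mul inv one i x -> normalises H x -> upper_central_mod j x.
Proof.
move=> Ec; elim: j i x => [|j IHj] i x.
  by rewrite addn0 => -> Lx _; move: Lx; rewrite Ec => ->.
move=> Eij Lx Nx; split=> // m Nm; apply: (IHj i.+1); first by rewrite addSnnS.
  by move=> L _; apply; exists x, m.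
by rewrite /Defs.commg; do !(apply: normalisesM || apply: normalisesV).
Qed.

Lemma conj_coset_transport b c e g h :
  conjset mul inv c (conjset mul inv e H) = conjset mul inv b H -> H h ->
  exists m, normalises H m /\ exists w, H w /\
    gconj (inv b) (gconj c (mul g (gconj e h))) = mul (gconj m (gconj (inv e) g)) w.
Proof.
move=> Eb Hh; pose m := mul (inv b) (mul c e).
have Nm : normalises H m.
  apply: normaliser_normalises; rewrite /normaliser /= /m !(conjsetM Hgrp) Eb.
  by rewrite -(conjsetM Hgrp) (gmulVg Hgrp) (conjset1 Hgrp).
exists m; split => //; exists (gconj m h); split; first exact: (Nm _ Hh).1.
by rewrite /m; group_simpl Hgrp.
Qed.

End RelativeUpperCentral.

Section TopologicalGroup.
Variables (G : topologicalType) (mul : G -> G -> G) (inv : G -> G) (one : G).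
Hypothesis HG : is_topgroup mul inv one.
Let Hgrp : is_group mul inv one := HG.1.
Local Notation gconj := (gconj mul inv).
Local Notation commg := (Defs.commg mul inv).

Lemma continuous_gmul (T : topologicalType) (f g : T -> G) :
  continuous f -> continuous g -> continuous (fun t => mul (f t) (g t)).
Proof.
move=> fc gc t.
by apply: continuous2_cvg; [exact: (HG.2.1 (f t, g t)) | exact: fc | exact: gc].
Qed.

Lemma continuous_ginv (T : topologicalType) (f : T -> G) :
  continuous f -> continuous (fun t => inv (f t)).
Proof. by move=> fc t; apply: continuous_comp; [exact: fc | exact: HG.2.2]. Qed.

Lemma continuous_gconj (T : topologicalType) (f g : T -> G) :
  continuous f -> continuous g -> continuous (fun t => gconj (f t) (g t)).
Proof.
by move=> fc gc; do !apply: continuous_gmul => //; apply: continuous_ginv.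
Qed.

Lemma closed_preimage (T : topologicalType) (phi : T -> G) (D : set G) :
  continuous phi -> closed D -> closed (phi @^-1` D).
Proof. by move=> phic; apply: preimage_closed => t _; apply: phic. Qed.

Let id_cont : continuous (fun m : G => m).
Proof. by move=> ?; exact: cvg_id. Qed.

Variable H : set G.
Hypothesis HHsub : is_subgroup mul inv one H.
Hypothesis HHcl : closed H.
Local Notation NH := (normalises mul inv H).
Local Notation ZH := (upper_central_mod mul inv H).

Lemma closed_normalises : closed NH.
Proof.
have -> : NH = \bigcap_(h in H)
    ((fun m => gconj m h) @^-1` H `&` (fun m => gconj (inv m) h) @^-1` H) by [].
apply: closed_bigI => h _; apply: closedI; apply: closed_preimage => //;
  apply: continuous_gconj; do ?apply: continuous_ginv; by [|exact: cst_continuous].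
Qed.

Lemma closed_upper_central_mod j : closed (ZH j).
Proof.
elim: j => [//|j IHj].
have -> : ZH j.+1 =
    NH `&` \bigcap_(m in NH) ((fun x => commg x m) @^-1` ZH j) by [].
apply: closedI; first exact: closed_normalises.
apply: closed_bigI => m _; apply: closed_preimage => //.
by do !apply: continuous_gmul; do ?apply: continuous_ginv; by [|exact: cst_continuous].
Qed.

Definition conj_cosets_approach_one (S : set G) (x : G) : Prop :=
  forall V, nbhs one V ->
  exists m, NH m /\ exists w, S w /\ V (mul (gconj m x) w).

Lemma upper_central_mod_approach_one j x :
  ZH j.+1 x -> conj_cosets_approach_one (ZH j) x -> ZH j x.
Proof.
move=> [_ Zx] Ax; apply: NNPP => nZx.
have [_ _ ZM ZV _] := upper_central_mod_normal Hgrp HHsub j.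
pose V := (fun v => mul (inv x) v) @^-1` ~` ZH j.
have nV : nbhs one V.
  apply: open_nbhs_nbhs; split.
    apply: open_comp; last by rewrite openC; exact: closed_upper_central_mod.
    by move=> v _; apply: continuous_gmul => //; exact: cst_continuous.
  by rewrite /V /= (gmulg1 Hgrp) => /ZV; rewrite (ginvgK Hgrp).
have [m [Nm [w [Zw Vw]]]] := Ax V nV.
(* [m x m^-1 w = x [x, m^-1] w] lies in [x Z_j], which [V] keeps away from [1]. *)
apply: Vw; rewrite /= -(mulg_commgV Hgrp) -(gmulA Hgrp) (gmulKg Hgrp).
by apply: ZM _ Zw; apply: Zx; apply: (normalisesV Hgrp).
Qed.

Lemma approach_one_upper_central_mod c d j x :
  lower_central mul inv one c = [set one] -> (j + d = c)%N ->
  NH x -> conj_cosets_approach_one (ZH j) x -> ZH j x.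
Proof.
move=> Ec; elim: d j => [|d IHd] j Ejd Nx Ax.
  apply: (lower_central_sub_upper_central_mod Hgrp HHsub (i := 0) Ec) => //.
  by rewrite -Ejd addn0.
apply: upper_central_mod_approach_one => //; apply: IHd => //; first by rewrite addSnnS.
move=> V /Ax[m [Nm [w [Zw Vw]]]]; exists m; split => //.
by exists w; split => //; apply: (upper_central_modS Hgrp HHsub).
Qed.

Lemma approach_one_mem x :
  nilpotent_group mul inv one -> NH x ->
  conj_cosets_approach_one H x -> H x.
Proof. by case=> c Ec; apply: (approach_one_upper_central_mod (d := c) (j := 0) Ec). Qed.

Lemma open_conjset_eq (L B : set G) :
  open B -> open [set g | exists b, B b /\ conjset mul inv g L = conjset mul inv b L].
Proof.
rewrite !openE => oB g0 [b [Bb Eb]].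
pose n := mul (inv b) g0.
have En : conjset mul inv n L = L.
  by rewrite (conjsetM Hgrp) Eb -(conjsetM Hgrp) (gmulVg Hgrp) (conjset1 Hgrp).
have nB : nbhs (mul g0 (inv n)) B.
  have -> : mul g0 (inv n) = b by rewrite /n; group_simpl Hgrp.
  exact: oB.
have near_g0 : \forall y \near g0, B (mul y (inv n)).
  exact: (continuous_gmul id_cont (@cst_continuous _ _ (inv n)) nB).
apply: filterS near_g0 => y By; exists (mul y (inv n)); split => //.
by rewrite -[in RHS]En -(conjsetM Hgrp); congr conjset; group_simpl Hgrp.
Qed.

End TopologicalGroup.

Section ConjugateSelection.
Variables (X G : topologicalType) (mul : G -> G -> G) (inv : G -> G) (one : G).
Hypothesis HG : is_topgroup mul inv one.
Let Hgrp : is_group mul inv one := HG.1.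
Local Notation gconj := (gconj mul inv).
Local Notation conjset := (conjset mul inv).
Variables (H : set G) (Hs : X -> set G).
Hypothesis Hs_in : forall y, conj_class mul inv H (Hs y).
Hypothesis Hs_cont : forall V : set (set G),
  open [set g | V (conjset g H)] -> open [set y | V (Hs y)].

Lemma selection_conj_near (y0 : X) (V : set G) : nbhs one V ->
  \forall y \near y0 & u \near one, exists b, Hs y = conjset b H /\ V (gconj (inv b) u).
Proof.
move=> nV; have [a0 Ea0] := Hs_in y0.
have : \forall p \near (a0, one), V (gconj (inv p.1) p.2).
  apply: (continuous_gconj HG (f := fun p => inv p.1) (g := snd)).
  - by apply: (continuous_ginv HG) => p; exact: cvg_fst.
  - by move=> p; exact: cvg_snd.
  by have -> : gconj (inv a0) one = one by group_simpl Hgrp.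
case=> -[B U] /= [Ba0 U1] BUV.
have : \forall y \near y0, exists b, B° b /\ Hs y = conjset b H.
  apply: open_nbhs_nbhs; split; last by exists a0.
  apply: (Hs_cont (V := fun K => exists b, B° b /\ K = conjset b H)).
  exact: (open_conjset_eq HG H (@open_interior _ B)).
move=> O_near; near=> y u.
have [b [Bb Eb]] : exists b, B° b /\ Hs y = conjset b H by near: y.
exists b; split => //; apply: (BUV (b, u)); split => //=; first exact: nbhs_singleton.
by near: u.
Unshelve. all: by end_near.
Qed.

Lemma selection_conj_uniform (V : set G) : compact [set: X] -> nbhs one V ->
  \forall u \near one, forall y, exists b, Hs y = conjset b H /\ V (gconj (inv b) u).
Proof.
move=> cX nV.
have cover : \forall u \near one,
    [set: X] `<=` [set y | exists b, Hs y = conjset b H /\ V (gconj (inv b) u)].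
  exact: (compact_near_coveringP [set: X]).1 cX _ _ _ _
    (fun y _ => selection_conj_near y nV).
by apply: filterS cover => u Pu y; apply: Pu.
Qed.

End ConjugateSelection.

Lemma meets_every_nbhs (T : topologicalType) (I : Type) (x : T) (S : I -> set T) :
  ~ (exists U, nbhs x U /\ forall i, S i `&` U = set0) ->
  forall U, nbhs x U -> exists i, S i `&` U !=set0.
Proof.
move=> far U nU; apply: NNPP => none; apply: far; exists U; split => // i.
by apply/seteqP; split => // y SUy; apply: none; exists i, y.
Qed.

Theorem lemma4p5
  (* the compact metrizable, locally connected group X and the minimal rotation T x = a x *)
  (X : topologicalType) (mulX : X -> X -> X) (invX : X -> X) (oneX : X)
  (HX : is_topgroup mulX invX oneX) (HXc : compact [set: X])
  (HXm : metrizable X) (HXlc : locally_connected X)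
  (a : X) (Hmin : minimal_map (rotn mulX invX oneX a 1))
  (* the nilpotent locally compact second countable (Hausdorff) group G *)
  (G : topologicalType) (mul : G -> G -> G) (inv : G -> G) (one : G)
  (HG : is_topgroup mul inv one) (HGh : hausdorff_space G)
  (HGlc : locally_compact [set: G]) (HGsc : @second_countable G)
  (HGnil : nilpotent_group mul inv one)
  (* the continuous topologically recurrent cocycle *)
  (f : X -> G) (Hfc : continuous f)
  (Hrec : top_recurrent (rotn mulX invX oneX a) (cocycle mulX invX oneX a mul inv one f) one)
  (* closed subgroup H and consistent selection y |-> H_y *)
  (H : set G) (HHsub : is_subgroup mul inv one H) (HHcl : closed H)
  (Hs : X -> set G)
  (Hs_in : forall y, conj_class mul inv H (Hs y))
  (Hs_cont : forall V : set (set G),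
      open [set g | V (conjset mul inv g H)] -> open [set y | V (Hs y)])
  (Hs_ess : forall y, Hs y `<=`
      ess_range (rotn mulX invX oneX a) (cocycle mulX invX oneX a mul inv one f) y)
  (Hs_eq : forall (y : X) (n : int),
      Hs (rotn mulX invX oneX a n y) =
      conjset mul inv (cocycle mulX invX oneX a mul inv one f n y) (Hs y))
  (Hnorm : forall y,
      ess_range (rotn mulX invX oneX a) (cocycle mulX invX oneX a mul inv one f) y
      `<=` normaliser mul inv (Hs y))
  (Hx : exists x,
      ess_range (rotn mulX invX oneX a) (cocycle mulX invX oneX a mul inv one f) x = Hs x)
  (z : X) (g : G) (Hg : normaliser mul inv (Hs z) g) (Hgn : ~ Hs z g) :
  exists U : set G, nbhs one U /\
    forall n : int,
      conjset mul inv (cocycle mulX invX oneX a mul inv one f n z)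
        (lcoset mul g (Hs z)) `&` U = set0.
Proof.
have Hgrp := HG.1.
have [e He] := Hs_in z.
pose g' := gconj mul inv (inv e) g.
have Ng' : normalises mul inv H g'.
  apply: (normaliser_normalises Hgrp); apply: (normaliser_conjset Hgrp).
  by rewrite -He.
have nHg' : ~ H g'.
  by move=> Hg'; apply: Hgn; rewrite He; exists g' => //; rewrite /g'; group_simpl Hgrp.
apply: NNPP => far; apply/nHg'/(approach_one_mem HG HHsub HHcl HGnil Ng') => V nV.
have near_one := selection_conj_uniform HG Hs_in Hs_cont HXc nV.
have [n [_ [[_ [h Hh <-] <-] near_u]]] := meets_every_nbhs far near_one.
have [b [Eb Vb]] := near_u (rotn mulX invX oneX a n z).
move: Eb Hh Vb; rewrite Hs_eq He => Eb [h' Hh' <-] Vb.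
have [m [Nm [w [Hw Ew]]]] := conj_coset_transport Hgrp g Eb Hh'.
by exists m; split => //; exists w; split => //; rewrite -Ew.
Qed.
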